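(* In the setting described in the context, with $\alpha>0$, for every $\xi\in\mathcal{L}^*$ we have $$\limsup_{\eta\to\xi}\frac{|F_\psi(\xi)-F_\psi(\eta)|}{|\xi-\eta|^\alpha}=\infty.$$
   Context: Setting: $X\subset\mathbb{R}$ compact connected, $A=\{0,\dots,d\}$, $f_a:X\to\mathrm{Int}X$ differentiable contractions satisfying strong separation ($f_a(\mathrm{Int}X)\subset\mathrm{Int}X$, $f_a(X)\cap f_b(X)=\emptyset$ for $a\ne b$) and the Hölder condition ($C^{1+\epsilon}$ diffeomorphic extensions $\tilde f_a$ to an open interval $Y\supset X$ with $\tilde f_a(Y)\subset Y$); $f_0(X)$ is the leftmost and $f_1(X)$ the rightmost interval among the $f_a(X)$. Limit set $\mathcal{L}=\bigcap_n\bigcup_{\omega\in A^n}f_\omega(X)$, identified with $A^{\mathbb{N}}$ via the coding map; cylinders $[x_1\dots x_n]$; Birkhoff sums $S_ng=\sum_{k<n}g\circ\sigma^k$. $\phi(\xi)=\log|f'_{x_1}(\xi)|$. Pressure $P(g)=\lim_n\frac1n\log\sum_{\omega\in A^n}\exp(\sup_{[\omega]}S_ng)$. $\psi$ is Hölder continuous with $\psi<0$, $P(\psi)=0$, $\psi>\alpha\phi$; $\nu_\psi$ is its Gibbs measure ($\nu_\psi([\omega])\asymp e^{S_n\psi(\xi)}$ uniformly for $\xi\in[\omega]$, $\omega\in A^n$), and $F_\psi(x)=\nu_\psi((-\infty,x])$, $x\in\mathbb{R}$. $\mathcal{E}$ is the set of $(x_1x_2\dots)\in\mathcal{L}$ for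 which there are $i\in\{0,1\}$ and $n$ with $x_k=i$ for all $k\ge n$, and $\mathcal{L}^*=\mathcal{L}\setminus\mathcal{E}$. *)

From HB Require Import structures.
From mathcomp Require Import all_boot all_order all_algebra.
From mathcomp Require Import all_classical all_reals all_analysis.
Set Implicit Arguments. Unset Strict Implicit. Unset Printing Implicit Defensive.
Import Order.TTheory GRing.Theory Num.Theory.
Import numFieldNormedType.Exports.
Local Open Scope classical_set_scope.
Local Open Scope ring_scope.

(* The alphabet A = {0,...,d} is 'I_d.+1 ; sequences x_1 x_2 ... are
   nat -> 'I_d.+1 with x_{k+1} = xi k. *)

(* symbol 1 of the alphabet (needs d >= 1) *)
Definition sym1 (d : nat) : 'I_d.+1 := inord 1.

Definition fw {R : realType} {d : nat} (f : 'I_d.+1 -> R -> R)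
  (w : seq 'I_d.+1) : R -> R := foldr (fun a g => f a \o g) id w.

Definition pref {d : nat} (xi : nat -> 'I_d.+1) (n : nat) : seq 'I_d.+1 :=
  mkseq xi n.

Definition shift {d : nat} (xi : nat -> 'I_d.+1) : nat -> 'I_d.+1 :=
  fun i => xi i.+1.

Definition birkhoff {R : realType} {d : nat} (g : (nat -> 'I_d.+1) -> R)
  (n : nat) (xi : nat -> 'I_d.+1) : R :=
  \sum_(k < n) g (iter k shift xi).

Definition limit_set {R : realType} {d : nat} (f : 'I_d.+1 -> R -> R)
  (X : set R) : set R :=
  [set x | forall n, exists w : n.-tuple 'I_d.+1, (fw f w @` X) x].

Definition coding {R : realType} {d : nat} (f : 'I_d.+1 -> R -> R)
  (X : set R) (xi : nat -> 'I_d.+1) : R :=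
  xget 0 [set x | forall n, (fw f (pref xi n) @` X) x].

Definition geom_pot {R : realType} {d : nat} (f : 'I_d.+1 -> R -> R)
  (X : set R) (xi : nat -> 'I_d.+1) : R :=
  ln `| derive1 (f (xi 0%N)) (coding f X (shift xi)) |.

Definition cyl {d : nat} (n : nat) (w : n.-tuple 'I_d.+1) : set (nat -> 'I_d.+1) :=
  [set xi | forall i : 'I_n, xi i = tnth w i].

Definition pressure_seq {R : realType} {d : nat} (g : (nat -> 'I_d.+1) -> R)
  (n : nat) : R :=
  n%:R^-1 * ln (\sum_(w : n.-tuple 'I_d.+1)
                  expR (sup [set birkhoff g n xi | xi in cyl w])).

(* Hoelder continuity on the symbolic space A^N (w.r.t. the metrics theta^{|xi ^ eta|}) *)
Definition symb_hoelder {R : realType} {d : nat} (g : (nat -> 'I_d.+1) -> R) : Prop :=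
  exists (C theta : R), 0 < theta < 1 /\
    forall (n : nat) (xi eta : nat -> 'I_d.+1),
      (forall i, (i < n)%N -> xi i = eta i) -> `|g xi - g eta| <= C * theta ^+ n.

(* the standing assumptions on X, f (f a is the C^{1+eps} extension tilde f_a,
   whose restriction to X is f_a) *)
Definition ifs_setting {R : realType} {d : nat} (X Y : set R)
  (f : 'I_d.+1 -> R -> R) : Prop :=
  ((1 <= d)%N /\ compact X /\ connected X /\ X !=set0) /\
    (
      (forall a, f a @` X `<=` interior X /\
         exists c : R, 0 <= c < 1 /\
           forall x y, X x -> X y -> `|f a x - f a y| <= c * `|x - y|)) /\
    (
      (forall a, f a @` interior X `<=` interior X) /\
      (forall a b, a != b -> f a @` X `&` f b @` X = set0)) /\
    (
      [/\ open Y, connected Y, X `<=` Y &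
       forall a, [/\ f a @` Y `<=` Y, {in Y &, injective (f a)},
         (forall x, Y x -> derivable (f a) x 1 /\ derive1 (f a) x != 0) &
         exists eps K : R, 0 < eps /\
           forall x y, Y x -> Y y ->
             `|derive1 (f a) x - derive1 (f a) y| <= K * `|x - y| `^ eps]]) /\
    (
      (forall a, a != ord0 -> forall x y, (f ord0 @` X) x -> (f a @` X) y -> x < y) /\
      (forall a, a != sym1 d -> forall x y, (f a @` X) x -> (f (sym1 d) @` X) y -> x < y)).

Definition eventually_01 {d : nat} (xi : nat -> 'I_d.+1) : Prop :=
  exists (i : 'I_d.+1), (i = ord0 \/ i = sym1 d) /\
    exists m, forall k, (m <= k)%N -> xi k = i.

(* Gibbs measure for psi, as a Borel probability measure on R carried by L
   (= the push-forward under the coding map of the measure on A^N) *)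
Definition gibbs_measure {R : realType} {d : nat} (f : 'I_d.+1 -> R -> R)
  (X : set R) (psi : (nat -> 'I_d.+1) -> R) (mu : {measure set R -> \bar R}) : Prop :=
  mu setT = 1%E /\ mu (~` limit_set f X) = 0%E /\
  exists C : R, 1 <= C /\
    forall (n : nat) (xi : nat -> 'I_d.+1),
      (C^-1 * expR (birkhoff psi n xi) <= fine (mu (fw f (pref xi n) @` X)))%R /\
      (fine (mu (fw f (pref xi n) @` X)) <= C * expR (birkhoff psi n xi))%R.

Definition distrF {R : realType} (mu : {measure set R -> \bar R}) (x : R) : R :=
  fine (mu [set y | y <= x]).

From Pilot Require Import Defs.
From HB Require Import structures.
From mathcomp Require Import all_boot all_order all_algebra.
From mathcomp Require Import all_classical all_reals all_analysis.
From mathcomp Require Import ring lra measurable_realfun.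
Set Implicit Arguments. Unset Strict Implicit. Unset Printing Implicit Defensive.
Import Order.TTheory GRing.Theory Num.Theory.
Import numFieldNormedType.Exports.
Local Open Scope classical_set_scope.
Local Open Scope ring_scope.
(* Give [Defs.shift] precedence over the analysis library's [shift]. *)
Import Pilot.Defs.

(* Since psi > alpha * phi pointwise and both sides are uniformly continuous on
   the compact space A^N, expR (psi / alpha) exceeds |f'_{x_1}(pi (sigma xi))|
   by a uniform margin.  Bounded distortion then puts the cylinder interval
   f_{x_1 ... x_n}(X) within K rho^n expR (S_n psi(xi) / alpha) of pi(xi), for
   some rho < 1, while its Gibbs mass is at least C^-1 expR (S_n psi(xi)).  So
   at twice that distance, on one side of pi(xi), F_psi changes by at least
   half of this mass, and the Hoelder quotient grows like rho^(-n alpha). *)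

Section RealFacts.
Variable R : realType.

Lemma finite_lt_bound (T : finType) (F : T -> R) (b : R) :
  (forall a, F a < b) -> exists2 c, c < b & forall a, F a <= c.
Proof.
move=> Fb; suff [c cb Fc] : exists2 c, c < b & forall a, a \in enum T -> F a <= c.
  by exists c => // a; apply: Fc; rewrite mem_enum.
elim: (enum T) => [|x s [c cb Fc]]; first by exists (b - 1) => //; rewrite gtrBl.
exists (Num.max (F x) c) => [|a]; first by rewrite gt_max cb Fb.
by rewrite inE le_max => /predU1P [->|/Fc ->]; rewrite ?lexx ?orbT.
Qed.

Lemma geometric_eventually_le (K q tau : R) : 0 <= q < 1 -> 0 < tau ->
  exists N, forall n, (N <= n)%N -> K * q ^+ n <= tau.
Proof.
move=> /andP [q0 q1] tau0; have K1 : 0 < `|K| + 1 by rewrite ltr_wpDl.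
have /cvg_expr/cvgrPdist_le/(_ _ (divr_gt0 tau0 K1)) [N _ HN] : `|q| < 1.
  by rewrite ger0_norm.
exists N => n /HN; rewrite sub0r normrN ger0_norm ?exprn_ge0 // => qn.
apply: (@le_trans _ _ ((`|K| + 1) * q ^+ n)); last by rewrite -ler_pdivlMl // mulrC.
by rewrite ler_wpM2r ?exprn_ge0 // (le_trans (ler_norm K)) // lerDl.
Qed.

Lemma ler_dist_is_derive (g dg : R -> R) (L u v : R) :
  (forall x, Num.min u v <= x <= Num.max u v ->
     is_derive x 1 g (dg x) /\ `|dg x| <= L) ->
  `|g u - g v| <= L * `|u - v|.
Proof.
wlog uv : u v / u <= v => [wlog_uv|].
  case/orP: (le_total u v) => [|vu gL]; first exact: wlog_uv.
  rewrite distrC [`|u - v|]distrC; apply: wlog_uv => // x.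
  by rewrite minC maxC; apply: gL.
rewrite (min_idPl uv) (max_idPr uv) => gL.
have {}gL x : x \in `[u, v] -> is_derive x 1 g (dg x) /\ `|dg x| <= L.
  by rewrite in_itv /=; apply: gL.
have g_cont : {within `[u, v], continuous g}.
  apply: continuous_in_subspaceT => x /[!inE] /gL [g'x _].
  by apply/differentiable_continuous/derivable1_diffP; apply: ex_derive.
rewrite distrC [`|u - v|]distrC.
have [e /gL [_ dgL] ->] :=
  MVT_segment uv (fun x xI => (gL x (subset_itv_oo_cc xI)).1) g_cont.
by rewrite normrM [`|v - u|]ger0_norm ?subr_ge0 // ler_wpM2r ?subr_ge0.
Qed.

Lemma expR_dist_le (a b : R) : a <= 0 -> b <= 0 -> `|expR a - expR b| <= `|a - b|.
Proof.
move=> a0 b0; rewrite -[X in _ <= X]mul1r; apply: ler_dist_is_derive => x.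
move=> /andP [_ xab]; split; first exact: is_derive_expR.
by rewrite ger0_norm ?expR_ge0 // -expR0 ler_expR (le_trans xab) // ge_max a0.
Qed.

Lemma powR_exprn (x a : R) n : 0 < x -> (x ^+ n) `^ a = (x `^ a) ^+ n.
Proof.
move=> x0; rewrite /powR !gt_eqF ?exprn_gt0 // lnXn //.
by rewrite mulrnAr -mulr_natr expRM_natr.
Qed.

Lemma powR_lt1 (x e : R) : 0 < x < 1 -> 0 < e -> x `^ e < 1.
Proof.
move=> /andP [x0 x1] e0.
by rewrite /powR gt_eqF // expR_lt1 pmulr_rlt0 // ln_lt0 // x0 x1.
Qed.

Lemma prod1Dgeo_le (b q : R) n : 0 <= b -> 0 <= q < 1 ->
  \prod_(j < n) (1 + b * q ^+ j) <= expR (b / (1 - q)).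
Proof.
move=> b0 /andP [q0 q1]; have q1' : 0 < 1 - q by rewrite subr_gt0.
apply: (@le_trans _ _ (\prod_(j < n) expR (b * q ^+ j))).
  by apply: ler_prod => j _; rewrite expR_ge1Dx addr_ge0 ?mulr_ge0 ?exprn_ge0.
rewrite -expR_sum ler_expR -mulr_sumr ler_wpM2l // -div1r ler_pdivlMr //.
have : q ^+ n - 1 = (q - 1) * \sum_(j < n) q ^+ j by apply: subrX1.
have : 0 <= q ^+ n by apply: exprn_ge0.
by rewrite mulrC; nra.
Qed.

Lemma lipschitz_within_continuous (A : set R) (g : R -> R) (k : R) :
  (forall x y, A x -> A y -> `|g x - g y| <= k * `|x - y|) ->
  {within A, continuous g}.
Proof.
move=> gk; apply/subspace_continuousP => x Ax; apply/cvgrPdist_le => e e0.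
have k1 : 0 < `|k| + 1 by rewrite ltr_wpDl.
rewrite near_withinE; apply/nbhs_ballP; exists (e / (`|k| + 1)) => /=.
  by rewrite divr_gt0.
move=> t; rewrite -ball_normE /= => xt At; apply: le_trans (gk _ _ Ax At) _.
apply: (@le_trans _ _ ((`|k| + 1) * `|x - t|)).
  by rewrite ler_wpM2r // (le_trans (ler_norm k)) // lerDl.
by rewrite mulrC -ler_pdivlMr // ltW.
Qed.

End RealFacts.

Section SymbolicSpace.
Variables (R : realType) (T : finType).

Definition symb_ucontinuous (g : (nat -> T) -> R) : Prop :=
  forall tau, 0 < tau -> exists n, forall z z',
    (forall i, (i < n)%N -> z i = z' i) -> `|g z - g z'| <= tau.

(* Koenig's lemma, i.e. sequential compactness of T^N. *)
Lemma prefix_cluster (s : nat -> nat -> T) :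
  exists z : nat -> T, forall n N,
    exists2 j, (N <= j)%N & forall i, (i < n)%N -> s j i = z i.
Proof.
pose t0 := s 0%N 0%N.
pose Inf (w : seq T) := forall N, exists2 j, (N <= j)%N &
  forall i, (i < size w)%N -> s j i = nth t0 w i.
have Inf_rcons w : Inf w -> exists a, Inf (rcons w a).
  move=> Iw; apply: contrapT => /forallNP noext.
  have /choice [Nf HNf] a : exists N, ~ exists2 j, (N <= j)%N &
      forall i, (i < size (rcons w a))%N -> s j i = nth t0 (rcons w a) i.
    by apply/existsNP; exact: noext.
  have [j Nj Hj] := Iw (\max_a Nf a).
  apply: (HNf (s j (size w))); exists j.
    exact: leq_trans (leq_bigmax _) Nj.
  move=> i; rewrite size_rcons ltnS leq_eqVlt nth_rcons.
  by case/predU1P => [->|iw]; rewrite ?ltnn ?eqxx ?iw //; apply: Hj.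
pose W n := iter n (fun w => rcons w (xget t0 [set a | Inf (rcons w a)])) [::].
have sizeW n : size (W n) = n by elim: n => //= n IH; rewrite size_rcons IH.
have InfW n : Inf (W n).
  elim: n => [N|n IH]; first by exists N.
  by rewrite [W _]/=; apply: (xgetPex t0 (Inf_rcons _ IH)).
exists (fun i => nth t0 (W i.+1) i) => n N.
have [j Nj Hj] := InfW n N; exists j => // i ilt; rewrite Hj ?sizeW //.
elim: n ilt {Hj} => // n IH; rewrite ltnS leq_eqVlt => /predU1P [-> //|iln].
by rewrite -(IH iln) [W n.+1]/= nth_rcons sizeW iln.
Qed.

Lemma symb_ucontinuous_pos_lb (g : (nat -> T) -> R) :
  (forall z, 0 < g z) -> symb_ucontinuous g -> exists2 c, 0 < c & forall z, c <= g z.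
Proof.
move=> g_gt0 g_ucont; apply: contrapT => no_lb.
have /choice [s gs] j : exists z, g z < 2^-1 ^+ j.
  apply: contrapT => /forallNP nz; apply: no_lb; exists (2^-1 ^+ j).
    by rewrite exprn_gt0 // invr_gt0.
  by move=> z; rewrite leNgt; apply/negP => gz; apply: (nz z).
have [z Hz] := prefix_cluster s.
have gz2 : 0 < g z / 2 by rewrite divr_gt0.
have [n Hn] := g_ucont _ gz2.
have half01 : 0 <= (2^-1 : R) < 1 by rewrite invr_ge0 ler0n invf_lt1 ?ltr1n.
have [N HN] := geometric_eventually_le 1 half01 gz2.
have [j Nj Hj] := Hz n N.
have := Hn z (s j) (fun i ilt => esym (Hj i ilt)).
have := gs j; have := HN j Nj; rewrite mul1r ler_norml; lra.
Qed.

End SymbolicSpace.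

Section Words.
Variables (R : realType) (d : nat).
Implicit Types (xi z : nat -> 'I_d.+1) (g : (nat -> 'I_d.+1) -> R).

Lemma iter_shift k xi i : iter k shift xi i = xi (k + i)%N.
Proof. by elim: k i => // k IH i; rewrite iterS /shift IH addnS. Qed.

Lemma size_pref xi n : size (pref xi n) = n.
Proof. exact: size_mkseq. Qed.

Lemma prefD xi k m : pref xi (k + m) = pref xi k ++ pref (iter k shift xi) m.
Proof.
rewrite /pref /mkseq iotaD map_cat add0n; congr (_ ++ _).
rewrite -[in iota k m](addn0 k) iotaDl -map_comp; apply: eq_map => i /=.
by rewrite iter_shift.
Qed.

Lemma eq_pref xi z n :
  (forall i, (i < n)%N -> xi i = z i) -> pref xi n = pref z n.
Proof.
move=> eq_xz; apply/eq_in_map => i.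
by rewrite mem_iota add0n => /andP [_ /eq_xz].
Qed.

Lemma symb_hoelder_ucontinuous g : symb_hoelder g -> symb_ucontinuous g.
Proof.
move=> [C [th [/andP [th0 th1] Hg]]] tau tau0.
have th01 : 0 <= th < 1 by rewrite (ltW th0) th1.
have [N HN] := geometric_eventually_le C th01 tau0.
by exists N => z z' zz'; apply: le_trans (HN N (leqnn N)); apply: Hg.
Qed.

Lemma symb_hoelder_bounded g : symb_hoelder g -> exists C, forall z, `|g z| <= C.
Proof.
move=> [C [th [_ Hg]]]; exists (C + `|g (fun _ => ord0)|) => z.
have := Hg 0%N z (fun _ => ord0) (fun i => ltac:(by [])).
by rewrite expr0 mulr1 => Hz; rewrite -lerBlDr (le_trans (lerB_dist _ _)).
Qed.

Lemma symb_ucontinuousB g1 g2 : symb_ucontinuous g1 -> symb_ucontinuous g2 ->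
  symb_ucontinuous (fun z => g1 z - g2 z).
Proof.
move=> g1c g2c tau tau0; have tau2 : 0 < tau / 2 by rewrite divr_gt0.
have [n1 H1] := g1c _ tau2; have [n2 H2] := g2c _ tau2.
exists (maxn n1 n2) => z z' zz'.
have := H1 z z' (fun i ilt => zz' i (leq_trans ilt (leq_maxl _ _))).
have := H2 z z' (fun i ilt => zz' i (leq_trans ilt (leq_maxr _ _))).
have := ler_normB (g1 z - g1 z') (g2 z - g2 z').
have -> : g1 z - g1 z' - (g2 z - g2 z') = g1 z - g2 z - (g1 z' - g2 z') by ring.
lra.
Qed.

End Words.

Section DistributionFunction.
Variables (R : realType) (mu : {measure set R -> \bar R}).
Hypothesis mu_finite : (mu setT < +oo)%E.

Lemma measure_fineK (A : set R) : measurable A -> (fine (mu A))%:E = mu A.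
Proof.
move=> mA; rewrite fineK // ge0_fin_numE ?measure_ge0 // (le_lt_trans _ mu_finite) //.
by apply: le_measure; rewrite ?inE.
Qed.

Lemma lray_itv (x : R) : [set y | y <= x] = [set` `]-oo, x]].
Proof. by apply/seteqP; split => y; rewrite /= in_itv. Qed.

Lemma distrFD (a b : R) : a <= b ->
  distrF mu b = distrF mu a + fine (mu [set` `]a, b]]).
Proof.
move=> ab; rewrite /distrF.
have -> : [set y | y <= b] = [set y | y <= a] `|` [set` `]a, b]].
  apply/seteqP; split => y /=; rewrite in_itv /=; first by case: leP => /=; auto.
  by case=> [ya|/andP [_ //]]; apply: le_trans ab.
apply/eqP; rewrite -eqe EFinD !measure_fineK ?lray_itv //; last exact: measurableU.
apply/eqP/measureU => //; apply/seteqP; split => y //= [].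
by rewrite !in_itv /= => ya /andP [ay _]; lra.
Qed.

Lemma distrF_jump (I : set R) (p r : R) : measurable I -> 0 < r ->
  (forall y, I y -> `|y - p| <= r) ->
  exists eta, `|p - eta| = 2 * r /\
    fine (mu I) / 2 <= `|distrF mu p - distrF mu eta|.
Proof.
move=> mI r0 Ir; set l := p - 2 * r; set u := p + 2 * r.
have Fl : distrF mu p - distrF mu l = fine (mu [set` `]l, p]]).
  by rewrite (@distrFD l p); [ring | rewrite /l; lra].
have Fu : distrF mu u - distrF mu p = fine (mu [set` `]p, u]]).
  by rewrite (@distrFD p u); [ring | rewrite /u; lra].
have mass_le : fine (mu I) <=
    (distrF mu p - distrF mu l) + (distrF mu u - distrF mu p).
  rewrite Fl Fu -lee_fin EFinD !measure_fineK //.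
  apply: le_trans (measureU2 _ _ _) => //; apply: le_measure; rewrite ?inE //.
    exact: measurableU.
  move=> y /Ir; rewrite ler_norml /= !in_itv /l /u /= => yr.
  by case: (leP y p) => yp; [left | right]; apply/andP; split; lra.
have r2 : 0 <= 2 * r by rewrite mulr_ge0 // ltW.
have [lp|pu] := leP (fine (mu I) / 2) (distrF mu p - distrF mu l).
  exists l; rewrite /l opprB addrC subrK ger0_norm //; split => //.
  by rewrite ler_normr lp.
exists u; rewrite /u opprD addrA subrr add0r normrN ger0_norm //.
by split => //; rewrite distrC ler_normr; apply/orP; left; lra.
Qed.

End DistributionFunction.

Section ContractingIFS.
Variables (R : realType) (d : nat) (X : set R) (f : 'I_d.+1 -> R -> R) (c D : R).
Hypothesis c01 : 0 < c < 1.
Hypothesis f_maps : forall a x, X x -> X (f a x).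
Hypothesis f_contr : forall a x y, X x -> X y -> `|f a x - f a y| <= c * `|x - y|.
Hypothesis X_diam : forall x y, X x -> X y -> `|x - y| <= D.

Let c_ge0 : 0 <= c. Proof. by case/andP: c01 => /ltW. Qed.

Lemma fw_cat w1 w2 x : fw f (w1 ++ w2) x = fw f w1 (fw f w2 x).
Proof. by elim: w1 => //= a w1 ->. Qed.

Lemma fw_maps w x : X x -> X (fw f w x).
Proof. by elim: w => //= a w IH /IH /f_maps. Qed.

Lemma fw_contr w x y : X x -> X y ->
  `|fw f w x - fw f w y| <= c ^+ size w * `|x - y|.
Proof.
elim: w => [|a w IH] Xx Xy /=; first by rewrite mul1r.
apply: le_trans (f_contr _ (fw_maps _ Xx) (fw_maps _ Xy)) _.
by rewrite exprS -mulrA ler_wpM2l // IH.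
Qed.

Lemma fw_image_diam w p q : (fw f w @` X) p -> (fw f w @` X) q ->
  `|p - q| <= c ^+ size w * D.
Proof.
move=> [x Xx <-] [y Xy <-]; apply: le_trans (fw_contr _ Xx Xy) _.
by rewrite ler_wpM2l ?exprn_ge0 // X_diam.
Qed.

Definition geom_cyl xi n := fw f (pref xi n) @` X.

Lemma geom_cyl_decr xi n m : (n <= m)%N -> geom_cyl xi m `<=` geom_cyl xi n.
Proof.
move=> nm p [x Xx <-]; rewrite -(subnKC nm) prefD fw_cat.
by exists (fw f (pref (iter n shift xi) (m - n)) x) => //; apply: fw_maps.
Qed.

Lemma geom_cyl_diam xi n p q : geom_cyl xi n p -> geom_cyl xi n q ->
  `|p - q| <= c ^+ n * D.
Proof. by move=> Ip Iq; have := fw_image_diam Ip Iq; rewrite size_pref. Qed.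

Section Distortion.
Variable h : nat -> R.
Hypothesis X_interval : forall x y z, X x -> X y -> x <= z <= y -> X z.
Hypothesis f_derivable : forall a x, X x -> derivable (f a) x 1.
Hypothesis h_ge0 : forall j, 0 <= h j.
Hypothesis f'_dist : forall j a u v, X u -> X v -> `|u - v| <= c ^+ j * D ->
  `|derive1 (f a) u - derive1 (f a) v| <= h j.

Lemma f_dist_le_derive a j z u v : X z -> X u -> X v ->
  `|u - z| <= c ^+ j * D -> `|v - z| <= c ^+ j * D ->
  `|f a u - f a v| <= (`|derive1 (f a) z| + h j) * `|u - v|.
Proof.
move=> Xz Xu Xv uz vz; apply: (ler_dist_is_derive (dg := derive1 (f a))) => x x_btw.
have [Xx xz] : X x /\ `|x - z| <= c ^+ j * D.
  move: uz vz x_btw; rewrite !ler_norml => /andP [uz1 uz2] /andP [vz1 vz2].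
  case: (leP u v) => uv /andP [ux xv].
    by split; [apply: (X_interval Xu Xv) | apply/andP; split]; lra.
  by split; [apply: (X_interval Xv Xu) | apply/andP; split]; lra.
split; first by rewrite derive1E; apply/derivableP/f_derivable.
rewrite -[derive1 _ x](subrK (derive1 (f a) z)) (le_trans (ler_normD _ _)) //.
by rewrite addrC lerD2l f'_dist.
Qed.

Lemma fw_distortion (w : seq 'I_d.+1) (z : nat -> R) :
  (forall k, (k < size w)%N -> (fw f (drop k.+1 w) @` X) (z k)) ->
  forall x y, X x -> X y ->
  `|fw f w x - fw f w y| <= `|x - y| *
    \prod_(k < size w) (`|derive1 (f (nth ord0 w k)) (z k)| + h (size w - k.+1)).
Proof.
elim: w z => [|a w IH] z zw x y Xx Xy /=; first by rewrite big_ord0 mulr1.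
rewrite big_ord_recl /= subn1 /= mulrCA.
have Iz : (fw f w @` X) (z 0%N) by have := zw 0%N isT; rewrite drop1.
have Iu : (fw f w @` X) (fw f w x) by exists x.
have Iv : (fw f w @` X) (fw f w y) by exists y.
have step : `|f a (fw f w x) - f a (fw f w y)| <=
    (`|derive1 (f a) (z 0%N)| + h (size w)) * `|fw f w x - fw f w y|.
  apply: f_dist_le_derive; try exact: fw_image_diam; try exact: fw_maps.
  by case: Iz => t Xt <-; apply: fw_maps.
apply: le_trans step _; rewrite ler_wpM2l ?addr_ge0 //.
by apply: (IH (fun k => z k.+1)) => // k; apply: (zw k.+1).
Qed.

End Distortion.

Hypothesis X_compact : compact X.
Hypothesis X_nonempty : X !=set0.

Lemma closed_fw_image w : closed (fw f w @` X).
Proof.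
apply: compact_closed; first exact: Rhausdorff.
apply: continuous_compact => //; apply: lipschitz_within_continuous.
exact: fw_contr.
Qed.

Lemma coding_geom_cyl xi n : geom_cyl xi n (coding f X xi).
Proof.
rewrite /coding; set P := (A in xget _ A).
suff [x Px] : exists x, P x by have := xgetPex 0 (ex_intro _ x Px); apply.
have := X_compact; rewrite compact_In0 => /(_ nat setT (geom_cyl xi)) [].
- exists (geom_cyl xi) => [i _|i _]; first exact: closed_fw_image.
  apply/seteqP; split => [p Ip|p [] //]; split => //.
  by case: Ip => x Xx <-; apply: fw_maps.
- move=> F _; case: X_nonempty => x0 Xx0.
  exists (fw f (pref xi (\max_(i <- finmap.enum_fset F) i)) x0) => i /= iF.
  have iF_le : (i <= \max_(j <- finmap.enum_fset F) j)%N by apply: leq_bigmax_seq.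
  by apply: (geom_cyl_decr iF_le); exists x0.
- by move=> x Ix; exists x => i; apply: Ix.
Qed.

End ContractingIFS.

Lemma hoelder_geometric (R : realType) (A : set R) (g : R -> R) (e K c D : R) :
  0 < e -> 0 < c -> 0 < D ->
  (forall x y, A x -> A y -> `|g x - g y| <= K * `|x - y| `^ e) ->
  forall j x y, A x -> A y -> `|x - y| <= c ^+ j * D ->
  `|g x - g y| <= `|K| * D `^ e * (c `^ e) ^+ j.
Proof.
move=> e0 c0 D0 gK j x y Ax Ay xy; apply: le_trans (gK _ _ Ax Ay) _.
have cjD_ge0 : 0 <= c ^+ j * D by rewrite mulr_ge0 ?exprn_ge0 ?(ltW c0) ?(ltW D0).
rewrite -powR_exprn // mulrAC -mulrA -powRM ?exprn_ge0 ?(ltW c0) ?(ltW D0) //.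
apply: (@le_trans _ _ (`|K| * `|x - y| `^ e)).
  by rewrite ler_wpM2r ?powR_ge0 ?ler_norm.
by rewrite ler_wpM2l //; apply: ge0_ler_powR; rewrite ?nnegrE ?(ltW e0).
Qed.

Section Setting.
Variables (R : realType) (d : nat) (X Y : set R) (f : 'I_d.+1 -> R -> R).
Hypothesis HS : ifs_setting X Y f.

Lemma ifs_compact : compact X.
Proof. by case: HS => [[_ []]]. Qed.

Lemma ifs_nonempty : X !=set0.
Proof. by case: HS => [[_ [_ []]]]. Qed.

Lemma ifs_interval x y z : X x -> X y -> x <= z <= y -> X z.
Proof.
move=> Xx Xy; case: HS => [[_ [_ [/connected_intervalP X_itv _]]] _].
exact: X_itv Xx Xy z.
Qed.

Lemma ifs_maps a x : X x -> X (f a x).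
Proof.
case: HS => _ [f_int _] Xx; apply: interior_subset.
by apply: (f_int a).1; exists x.
Qed.

Let ifs_smooth a x : X x -> derivable (f a) x 1 /\ derive1 (f a) x != 0.
Proof.
move=> Xx; case: HS => _ [_ [_ [[_ _ XY f_smooth] _]]].
by case: (f_smooth a) => _ _ /(_ x (XY x Xx)).
Qed.

Lemma ifs_derivable a x : X x -> derivable (f a) x 1.
Proof. by move=> /(ifs_smooth a) []. Qed.

Lemma ifs_derive_neq0 a x : X x -> derive1 (f a) x != 0.
Proof. by move=> /(ifs_smooth a) []. Qed.

Lemma ifs_contraction : exists2 c, 0 < c < 1 &
  forall a x y, X x -> X y -> `|f a x - f a y| <= c * `|x - y|.
Proof.
case: HS => _ [f_contr _].
have /choice [cf cfP] a : exists c, (0 <= c < 1) /\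
    forall x y, X x -> X y -> `|f a x - f a y| <= c * `|x - y|.
  by have [_ [c cP]] := f_contr a; exists c.
have [cm cm1 cmP] := @finite_lt_bound R _ cf 1 (fun a => (andP (cfP a).1).2).
exists (Num.max 2^-1 cm) => [|a x y Xx Xy].
  by rewrite lt_max invr_gt0 ltr0n gt_max cm1 invf_lt1 ?ltr1n.
apply: le_trans ((cfP a).2 x y Xx Xy) _.
by rewrite ler_wpM2r // le_max cmP orbT.
Qed.

Lemma ifs_bounded : exists2 D, 0 < D & forall x y, X x -> X y -> `|x - y| <= D.
Proof.
have [M [M_real XM]] := compact_bounded ifs_compact.
have M1 : `|M| < `|M| + 1 by rewrite ltrDl.
exists (2 * (`|M| + 1)) => [|x y Xx Xy]; first by rewrite mulr_gt0 // ltr_wpDl.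
apply: le_trans (ler_normB _ _) _.
by have := XM _ (le_lt_trans (real_ler_norm M_real) M1) _ Xx;
   have := XM _ (le_lt_trans (real_ler_norm M_real) M1) _ Xy => /= xM yM; lra.
Qed.

Lemma ifs_derive_hoelder c D : 0 < c < 1 -> 0 < D -> exists B q,
  [/\ 0 <= B, 0 <= q < 1 & forall j a u v, X u -> X v -> `|u - v| <= c ^+ j * D ->
    `|derive1 (f a) u - derive1 (f a) v| <= B * q ^+ j].
Proof.
move=> /andP [c0 c1] D0.
case: HS => _ [_ [_ [[_ _ XY f_smooth] _]]].
have /choice [p pP] a : exists p : R * R, 0 < p.1 /\ forall x y, X x -> X y ->
    `|derive1 (f a) x - derive1 (f a) y| <= p.2 * `|x - y| `^ p.1.
  have [_ _ _ [e [K [e0 eK]]]] := f_smooth a.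
  by exists (e, K); split => // x y /XY Yx /XY Yy; apply: eK.
have cp_lt1 a : c `^ (p a).1 < 1 by rewrite powR_lt1 ?c0 ?c1 ?(pP a).1.
have [q q1 qP] := finite_lt_bound cp_lt1.
pose Ba a := `|(p a).2| * D `^ (p a).1.
have Ba_ge0 a : 0 <= Ba a by rewrite mulr_ge0 ?powR_ge0.
have q0 : 0 <= q by apply: le_trans (qP ord0); apply: powR_ge0.
exists (\sum_a Ba a), q; split; [exact: sumr_ge0 | by rewrite q0 q1 |].
move=> j a u v Xu Xv uv.
apply: le_trans (hoelder_geometric (pP a).1 c0 D0 (pP a).2 Xu Xv uv) _.
apply: ler_pM.
- exact: Ba_ge0.
- by rewrite exprn_ge0 ?powR_ge0.
- by rewrite (bigD1 a) //= lerDl sumr_ge0.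
- by apply: lerXn2r; rewrite ?nnegrE ?powR_ge0.
Qed.

End Setting.

Lemma small_radius_large_ratio (R : realType) (K rho alpha C M delta : R)
    (S : nat -> R) :
  0 < K -> 0 < rho < 1 -> 0 < alpha -> 0 < C -> 0 < delta ->
  (forall n, S n <= 0) ->
  exists n, K * rho ^+ n * expR (S n / alpha) < delta /\
    M * (K * rho ^+ n * expR (S n / alpha)) `^ alpha < C * expR (S n).
Proof.
move=> K0 /andP [rho0 rho1] alpha0 C0 delta0 S_le0.
have rho01 : 0 <= rho < 1 by rewrite (ltW rho0) rho1.
have rhoa01 : 0 <= rho `^ alpha < 1 by rewrite powR_ge0 powR_lt1 ?rho0 ?rho1.
have [N1 HN1] := geometric_eventually_le K rho01 (divr_gt0 delta0 (ltr0Sn _ 1)).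
have [N2 HN2] := geometric_eventually_le (`|M| * K `^ alpha) rhoa01
  (divr_gt0 C0 (ltr0Sn _ 1)).
exists (N1 + N2)%N; set n := (N1 + N2)%N.
have eS1 : expR (S n / alpha) <= 1.
  by rewrite -expR0 ler_expR pmulr_lle0 ?invr_gt0.
split.
  apply: (@le_lt_trans _ _ (K * rho ^+ n)).
    by rewrite ler_piMr ?mulr_ge0 ?exprn_ge0 ?(ltW K0) ?(ltW rho0).
  apply: le_lt_trans (HN1 n (leq_addr _ _)) _.
  by rewrite ltr_pdivrMr // ltr_pMr // ltr1n.
rewrite !powRM ?mulr_ge0 ?exprn_ge0 ?expR_ge0 ?(ltW K0) ?(ltW rho0) // powR_exprn //.
rewrite -expRM divfK ?gt_eqF // mulrA.
apply: le_lt_trans (_ : _ <= C / 2 * expR (S n)) _; last first.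
  by rewrite ltr_pM2r ?expR_gt0 // ltr_pdivrMr // ltr_pMr // ltr1n.
rewrite ler_wpM2r ?expR_ge0 //; apply: le_trans (HN2 n (leq_addl _ _)).
by rewrite mulrA ler_wpM2r ?exprn_ge0 ?powR_ge0 // ler_wpM2r ?powR_ge0 // ler_norm.
Qed.

Section CylinderRadius.
Variables (R : realType) (d : nat) (X Y : set R) (f : 'I_d.+1 -> R -> R).
Variables (psi : (nat -> 'I_d.+1) -> R) (alpha c D B q : R).
Hypothesis HS : ifs_setting X Y f.
Hypothesis c01 : 0 < c < 1.
Hypothesis f_contr : forall a x y, X x -> X y -> `|f a x - f a y| <= c * `|x - y|.
Hypothesis D_gt0 : 0 < D.
Hypothesis X_diam : forall x y, X x -> X y -> `|x - y| <= D.
Hypothesis B_ge0 : 0 <= B.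
Hypothesis q01 : 0 <= q < 1.
Hypothesis f'_dist : forall j a u v, X u -> X v -> `|u - v| <= c ^+ j * D ->
  `|derive1 (f a) u - derive1 (f a) v| <= B * q ^+ j.
Hypothesis psi_hoelder : symb_hoelder psi.
Hypothesis psi_lt0 : forall xi, psi xi < 0.
Hypothesis alpha_gt0 : 0 < alpha.
Hypothesis psi_gt : forall xi, alpha * geom_pot f X xi < psi xi.

Local Notation pi := (coding f X).
(* [dphi xi] is expR (geom_pot f X xi), the contraction rate of f_{x_1} at pi xi. *)
Local Notation dphi xi := (`|derive1 (f (xi 0%N)) (pi (shift xi))|).
Local Notation epsi xi := (expR (psi xi / alpha)).

Lemma coding_in_cyl xi n : geom_cyl X f xi n (pi xi).
Proof.
exact: (coding_geom_cyl c01 (ifs_maps HS) f_contr (ifs_compact HS) (ifs_nonempty HS)).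
Qed.

Lemma coding_in xi : X (pi xi).
Proof. by have [x Xx <-] := coding_in_cyl xi 0. Qed.

Lemma dphi_gt0 xi : 0 < dphi xi.
Proof. by rewrite normr_gt0; apply: (ifs_derive_neq0 HS); apply: coding_in. Qed.

Lemma dphi_lt_epsi xi : dphi xi < epsi xi.
Proof.
rewrite -[dphi xi]lnK ?posrE ?dphi_gt0 // ltr_expR ltr_pdivlMr // mulrC.
exact: psi_gt.
Qed.

Lemma epsi_lt1 xi : epsi xi < 1.
Proof. by rewrite expR_lt1 ltr_pdivrMr // mul0r. Qed.

Lemma symb_ucontinuous_epsi : symb_ucontinuous (fun xi => epsi xi).
Proof.
apply: symb_hoelder_ucontinuous.
have [C [th [th01 psiC]]] := psi_hoelder.
exists (C / alpha), th; split => // n xi z xz.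
have psi_le0 z' : psi z' / alpha <= 0 by rewrite ltW // ltr_pdivrMr // mul0r.
apply: le_trans (expR_dist_le (psi_le0 _) (psi_le0 _)) _.
rewrite -mulrBl normrM [`|alpha^-1|]gtr0_norm ?invr_gt0 //.
by rewrite mulrAC ler_pM2r ?invr_gt0 // psiC.
Qed.

Lemma symb_ucontinuous_dphi : symb_ucontinuous (fun xi => dphi xi).
Proof.
move=> tau tau0; have [N HN] := geometric_eventually_le B q01 tau0.
exists N.+1 => xi z xz; have -> : xi 0%N = z 0%N by apply: xz.
have eq_p : pref (shift xi) N = pref (shift z) N.
  by apply: eq_pref => i iN; apply: xz.
have Iz := coding_in_cyl (shift z) N; rewrite /geom_cyl -eq_p in Iz.
apply: le_trans (ler_dist_dist _ _) _; apply: le_trans (HN N (leqnn N)).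
apply: f'_dist; try exact: coding_in.
exact: (geom_cyl_diam c01 (ifs_maps HS) f_contr X_diam (coding_in_cyl _ N) Iz).
Qed.

Lemma dphi_gap : exists2 c1, 0 < c1 & forall xi, dphi xi <= epsi xi - c1.
Proof.
have gap_gt0 xi : 0 < epsi xi - dphi xi by rewrite subr_gt0 dphi_lt_epsi.
have [c1 c1_gt0 c1P] := symb_ucontinuous_pos_lb gap_gt0
  (symb_ucontinuousB symb_ucontinuous_epsi symb_ucontinuous_dphi).
by exists c1 => // xi; have := c1P xi; lra.
Qed.

Lemma epsi_lb : exists2 m, 0 < m & forall xi, m <= epsi xi.
Proof.
have [C psiC] := symb_hoelder_bounded psi_hoelder.
exists (expR (- C / alpha)) => [|xi]; first exact: expR_gt0.
rewrite ler_expR ler_pM2r ?invr_gt0 // lerNl.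
by apply: le_trans (psiC xi); rewrite -normrN ler_norm.
Qed.

Lemma geom_cyl_dist_le xi n p : geom_cyl X f xi n p ->
  `|p - pi xi| <= D * \prod_(k < n) (dphi (iter k shift xi) + B * q ^+ (n - k.+1)).
Proof.
move=> [y Xy <-]; have [x Xx <-] := coding_in_cyl xi n.
have z_in k : (k < size (pref xi n))%N ->
    (fw f (drop k.+1 (pref xi n)) @` X) (pi (iter k.+1 shift xi)).
  rewrite size_pref => kn; rewrite -(subnKC kn) prefD drop_size_cat ?size_pref //.
  exact: coding_in_cyl.
have Bq_ge0 j : 0 <= B * q ^+ j by rewrite mulr_ge0 ?exprn_ge0 //; case/andP: q01.
apply: le_trans (fw_distortion c01 (ifs_maps HS) f_contr X_diam (ifs_interval HS)
  (ifs_derivable HS) Bq_ge0 f'_dist z_in Xy Xx) _.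
rewrite size_pref; apply: ler_pM.
- exact: normr_ge0.
- by apply: prodr_ge0 => k _; rewrite addr_ge0.
- exact: X_diam.
rewrite (eq_bigr (fun k : 'I_n => dphi (iter k shift xi) + B * q ^+ (n - k.+1))) //.
by move=> k _; rewrite /pref nth_mkseq // iterS iter_shift addn0.
Qed.

Lemma geom_cyl_radius : exists K rho, [/\ 0 < K, 0 < rho < 1 &
  forall xi n p, geom_cyl X f xi n p ->
    `|p - pi xi| <= K * rho ^+ n * expR (birkhoff psi n xi / alpha)].
Proof.
have [c1 c1_gt0 gap] := dphi_gap.
have [m m_gt0 epsi_ge] := epsi_lb.
have c1_lt1 : c1 < 1.
  have := gap (fun _ => ord0); have := dphi_gt0 (fun _ => ord0).
  have := epsi_lt1 (fun _ => ord0); lra.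
pose rho := 1 - c1; have rho_gt0 : 0 < rho by rewrite subr_gt0.
pose b := B / m / rho.
have b_ge0 : 0 <= b by rewrite !divr_ge0 ?(ltW m_gt0) ?(ltW rho_gt0).
have q_ge0 : 0 <= q by case/andP: q01.
have factor_le xi j :
    dphi xi + B * q ^+ j <= epsi xi * (rho * (1 + b * q ^+ j)).
  have t_ge0 : 0 <= q ^+ j by rewrite exprn_ge0.
  have -> : epsi xi * (rho * (1 + b * q ^+ j)) =
      epsi xi * rho + epsi xi * (B / m * q ^+ j).
    by rewrite /b; field; rewrite ?gt_eqF.
  apply: lerD.
    apply: le_trans (gap xi) _; rewrite /rho mulrBr mulr1 lerD2l lerN2.
    by rewrite ler_piMl ?(ltW c1_gt0) ?(ltW (epsi_lt1 xi)).
  have -> : B * q ^+ j = m * (B / m * q ^+ j) by field; rewrite gt_eqF.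
  have Bmt_ge0 : 0 <= B / m * q ^+ j by rewrite mulr_ge0 ?divr_ge0 ?(ltW m_gt0).
  by apply: (ler_wpM2r Bmt_ge0).
clearbody b; exists (D * expR (b / (1 - q))), rho; split.
- by rewrite mulr_gt0 ?expR_gt0.
- by rewrite rho_gt0 ltrBlDr ltrDl.
move=> xi n p /geom_cyl_dist_le /le_trans; apply.
rewrite -!mulrA ler_pM2l //.
apply: le_trans (_ : \prod_(k < n) (epsi (iter k shift xi) *
    (rho * (1 + b * q ^+ (n - k.+1)))) <= _).
  apply: ler_prod => k _; rewrite factor_le andbT addr_ge0 ?mulr_ge0 //.
  exact: exprn_ge0.
rewrite !big_split /= prodr_const card_ord.
have -> : \prod_(k < n) (1 + b * q ^+ (n - k.+1)) =
    \prod_(0 <= k < n) (1 + b * q ^+ k) by rewrite big_rev_mkord subn0.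
rewrite big_mkord /birkhoff mulr_suml expR_sum mulrCA mulrA [X in _ <= X]mulrC.
have E_ge0 : 0 <= rho ^+ n * \prod_(k < n) expR (psi (iter k shift xi) / alpha).
  by rewrite mulr_ge0 ?exprn_ge0 ?(ltW rho_gt0) // prodr_ge0 // => k _; apply: expR_ge0.
by apply: (ler_wpM2l E_ge0); apply: prod1Dgeo_le.
Qed.

End CylinderRadius.

Theorem lemma2p2 (R : realType) (d : nat) (X Y : set R) (f : 'I_d.+1 -> R -> R)
  (psi : (nat -> 'I_d.+1) -> R) (mu : {measure set R -> \bar R}) (alpha : R) :
  ifs_setting X Y f ->
  symb_hoelder psi ->
  (forall xi, psi xi < 0) ->
  pressure_seq psi @ \oo --> (0 : R) ->
  (forall xi, alpha * geom_pot f X xi < psi xi) ->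
  gibbs_measure f X psi mu ->
  0 < alpha ->
  forall xi : nat -> 'I_d.+1, ~ eventually_01 xi ->
  forall M : R, forall delta : R, 0 < delta ->
    exists eta : R, 0 < `|coding f X xi - eta| < delta /\
      M < `|distrF mu (coding f X xi) - distrF mu eta|
            / `|coding f X xi - eta| `^ alpha.
Proof.
move=> HS psi_hoelder psi_lt0 _ psi_gt [mu1 [_ [C [C_ge1 mass]]]] alpha_gt0 xi _.
move=> M delta delta_gt0.
have [c c01 f_contr] := ifs_contraction HS.
have [D D_gt0 X_diam] := ifs_bounded HS.
have [B [q [B_ge0 q01 f'_dist]]] := ifs_derive_hoelder HS c01 D_gt0.
have [K [rho [K_gt0 rho01 radius]]] := geom_cyl_radius HS c01 f_contr D_gt0 X_diam
  B_ge0 q01 f'_dist psi_hoelder psi_lt0 alpha_gt0 psi_gt.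
have Cinv2_gt0 : 0 < C^-1 / 2 by rewrite divr_gt0 // invr_gt0 (lt_le_trans ltr01 C_ge1).
have S_le0 n : birkhoff psi n xi <= 0 by apply: sumr_le0 => k _; apply: ltW.
have [n [small ratio]] := small_radius_large_ratio M (mulr_gt0 (ltr0Sn _ 1) K_gt0)
  rho01 alpha_gt0 Cinv2_gt0 delta_gt0 S_le0.
set r := K * rho ^+ n * expR (birkhoff psi n xi / alpha).
have r_gt0 : 0 < r by rewrite !mulr_gt0 ?exprn_gt0 ?expR_gt0 //; case/andP: rho01.
have mu_finite : (mu setT < +oo)%E by rewrite mu1 ltry.
have cyl_measurable : measurable (geom_cyl X f xi n).
  apply: closed_measurable.
  exact: (closed_fw_image c01 (ifs_maps HS) f_contr (ifs_compact HS)).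
have [eta [dist jump]] := distrF_jump mu_finite cyl_measurable r_gt0 (radius xi n).
have r2_gt0 : 0 < 2 * r by rewrite mulr_gt0.
exists eta; rewrite dist; split; first by rewrite r2_gt0 /r !mulrA.
rewrite ltr_pdivlMr ?powR_gt0 // /r !mulrA.
apply: lt_le_trans ratio _; apply: le_trans jump.
by rewrite mulrAC ler_pM2r ?invr_gt0 // (mass n xi).1.
Qed.
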